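(* Let $f'$ and $f''$ be endofunctions of $[n']$ and $[n'']$ respectively. Then in $\mathbf{EFSym}$ $$R_{f'}R_{f''}=\sum_f R_f,$$ where the sum is over all endofunctions $f$ of $[n'+n'']$ such that $\mathrm{std}(f^{[n']})=f'$ and $\mathrm{std}(f^{[n'+n'']\setminus[n']})=f''$.
   Context: $\mathbf{EFSym}$: over $A=\{a_{ij}:i\ne j,\ i,j\ge1\}$ with $a_{ij}\prec a_{kl}$ iff $j=k$, for $f:[n]\to[n]$, $\mathbf S^f$ is the sum of words $w_1\cdots w_n$ over $A$ with $w_{f(j)}\prec w_j$ whenever $f(j)\ne j$; the $\mathbf S^f$ form a basis of $\mathbf{EFSym}$ with $\mathbf S^f\mathbf S^g=\mathbf S^{f\bullet g}$ (shifted concatenation: $i\mapsto f(i)$ for $i\le n$, $n+i\mapsto g(i)+n$). For $I\subseteq[n]$, $f^I:I\to I$ is $f^I(x)=f(x)$ if $f(x)\in I$ and $f^I(x)=x$ otherwise; $\mathrm{std}(f^I)=\tau_I\circ f^I\circ\tau_I^{-1}$ with $\tau_I:I\to[|I|]$ increasing. Partial order on endofunctions of $[n]$: the cover relation is $f<g$ iff there is $j$ with $f(j)\ne j$, $g(j)=j$ and $g(k)=f(k)$ for all $k\ne j$ (so $f\le g$ iff $g$ is obtained from $f$ by turning some non-fixed points into fixed points). $\mathrm{Fix}(f)$ is the number of fixed points of $f$, and $R_f=\sum_{g\le f}(-1)^{\mathrm{Fix}(f)-\mathrm{Fix}(g)}\mathbf S^g$. *)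

From HB Require Import structures.
From mathcomp Require Import all_boot all_order all_algebra.
Set Implicit Arguments. Unset Strict Implicit. Unset Printing Implicit Defensive.
Import GRing.Theory.
Local Open Scope ring_scope.

(* Endofunctions of [n] are {ffun 'I_n -> 'I_n} (0-indexed: [n] = {0,...,n-1}). *)
Notation endo n := {ffun 'I_n -> 'I_n}.

(* Letters a_ij are pairs (i,j) with i <> j, i,j >= 1. *)
Definition letter := (nat * nat)%type.
Definition valid_letter (a : letter) : bool := [&& a.1 != a.2, (0 < a.1)%N & (0 < a.2)%N].
Definition prec (a b : letter) : bool := a.2 == b.1.

(* Formal series in noncommuting letters: coefficient function on words. *)
Definition series := seq letter -> int.

Definition ser_mul (F G : series) : series :=
  fun w => \sum_(i < (size w).+1) F (take i w) * G (drop i w).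

Definition Sf n (f : endo n) : series :=
  fun w => ([&& size w == n, all valid_letter w &
             [forall j : 'I_n, (f j != j) ==> prec (nth (0%N,0%N) w (f j)) (nth (0%N,0%N) w j)]] : nat)%:Z.

Definition Fix n (f : endo n) : nat := #|[set x | f x == x]|.

Definition efle n (f g : endo n) : bool := [forall k, (g k == f k) || (g k == k)].

Definition Rf n (f : endo n) : series :=
  fun w => \sum_(g : endo n | efle g f) (-1) ^+ (Fix f - Fix g) * Sf g w.

(* std(f^I) : the restriction f^I, standardized via the increasing bijection
   tau_I : I -> [#|I|] (enum I lists I in increasing order). *)
Definition stdres n (f : endo n) (I : {set 'I_n}) : endo #|I| :=
  [ffun k : 'I_#|I| =>
     let x := enum_val k in
     if f x \in I then insubd k (index (f x) (enum I)) else k].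

(* Graph of an endofunction as a nat sequence (used to compare endofunctions
   of [m] and [m'] with m = m' only propositionally). *)
Definition ef_code m (g : endo m) : seq nat := [seq val (g k) | k <- enum 'I_m].

Definition lowset n1 n2 : {set 'I_(n1 + n2)} := [set i : 'I_(n1 + n2) | (i < n1)%N].
Definition highset n1 n2 : {set 'I_(n1 + n2)} := [set i : 'I_(n1 + n2) | (n1 <= i)%N].

From HB Require Import structures.
From mathcomp Require Import all_boot all_order all_algebra.
Set Implicit Arguments. Unset Strict Implicit. Unset Printing Implicit Defensive.
Import GRing.Theory.
Local Open Scope ring_scope.

(* On a word w of length n, S^g w is the product over the positions j of the
   indicator of the constraint at j, so the alternating sum R_f w factors as
   a product over j of a term depending only on f j: the constraint
   w_(f j) ≺ w_j when f j <> j, and the signed sum of the constraints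
   w_z ≺ w_j over all z when f j = j.  In the concatenation product only the
   cut after n1 letters survives.  On the right-hand side the two
   standardization conditions restrict every f j independently, so the sum
   over f is again a product over j.  For j in one block a non-fixed value
   of f1 (or f2) determines f j, while a fixed point allows f j = j or any
   position of the other block; those extra terms cancel exactly the
   negative contributions of the other block to the fixed-point factor. *)

Local Notation no_letter := (0%N, 0%N).

Definition valid_word n (w : seq letter) : bool := (size w == n) && all valid_letter w.

Definition sfactor n (w : seq letter) (j y : 'I_n) : int :=
  ((y == j) || prec (nth no_letter w y) (nth no_letter w j) : nat)%:Z.

Definition rfactor n (w : seq letter) (j y : 'I_n) : int :=
  if y == j then \sum_z (-1) ^+ (z != j) * sfactor w j z else sfactor w j y.

Lemma prod_nat_bool (T : finType) (b : pred T) :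
  \prod_j ((b j : nat)%:Z) = ([forall j, b j] : nat)%:Z.
Proof.
have [/forallP bT | /forallPn [j /negbTE bj]] := boolP [forall j, b j].
  by rewrite big1 // => j _; rewrite bT.
by rewrite (bigD1 j) //= bj mul0r.
Qed.

Lemma Sf_prodE n (g : endo n) w :
  Sf g w = (valid_word n w : nat)%:Z * \prod_j sfactor w j (g j).
Proof.
rewrite /Sf /valid_word /sfactor prod_nat_bool.
have -> : [forall j, (g j != j) ==> prec (nth no_letter w (g j)) (nth no_letter w j)]
  = [forall j, (g j == j) || prec (nth no_letter w (g j)) (nth no_letter w j)].
  by apply: eq_forallb => j; rewrite implybE negbK.
by rewrite -PoszM mulnb andbA.
Qed.

Lemma signFix_prod n (f g : endo n) : efle g f ->
  \prod_j ((-1 : int) ^+ ((f j == j) && (g j != j))) = (-1) ^+ (Fix f - Fix g).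
Proof.
move=> /forallP gf; rewrite prodrXr; congr (_ ^+ _).
rewrite /Fix -(cardsDS (B := [set x | g x == x])); last first.
  by apply/subsetP => x; rewrite !inE => /eqP gx; have := gf x; rewrite gx orbb.
rewrite -sum1_card [RHS]big_mkcond /=; apply: eq_bigr => j _.
by rewrite !inE andbC; case: (_ && _).
Qed.

Lemma sum_sign_sfactor n w (f : endo n) (j : 'I_n) :
  \sum_(y | (f j == y) || (f j == j)) (-1) ^+ ((f j == j) && (y != j)) * sfactor w j y
  = rfactor w j (f j).
Proof.
rewrite /rfactor; case: (eqVneq (f j) j) => [-> | fj_neq].
  by apply: eq_big => [y | y _]; rewrite /= ?orbT.
by rewrite (big_pred1 (f j)) => [|y]; rewrite /= ?expr0 ?mul1r // orbF eq_sym.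
Qed.

Lemma Rf_prodE n (f : endo n) w :
  Rf f w = (valid_word n w : nat)%:Z * \prod_j rfactor w j (f j).
Proof.
under [in RHS]eq_bigr => j _ do rewrite -sum_sign_sfactor.
rewrite bigA_distr_big_dep mulr_sumr /Rf.
apply: eq_big => [g | g gf].
  by apply/forallP/familyP => gf j; exact: gf j.
by rewrite Sf_prodE big_split /= signFix_prod // mulrCA.
Qed.

Lemma valid_word_take_drop n1 n2 w i : (i <= size w)%N ->
  valid_word n1 (take i w) && valid_word n2 (drop i w)
  = (i == n1) && valid_word (n1 + n2) w.
Proof.
move=> le_i_w; rewrite /valid_word size_takel // size_drop.
rewrite andbACA -all_cat cat_take_drop andbA.
congr (_ && _); case: eqP => [i_n1 | //].
by rewrite -(eqn_add2l n1) -i_n1 subnKC.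
Qed.

Lemma ser_mul_valid_word n1 n2 (F G : series) (F' G' : seq letter -> int) :
  (forall u, F u = (valid_word n1 u : nat)%:Z * F' u) ->
  (forall v, G v = (valid_word n2 v : nat)%:Z * G' v) ->
  forall w, ser_mul F G w
    = (valid_word (n1 + n2) w : nat)%:Z * (F' (take n1 w) * G' (drop n1 w)).
Proof.
move=> FE GE w; rewrite /ser_mul.
under eq_bigr => i _ do
  rewrite FE GE mulrACA -PoszM mulnb (valid_word_take_drop _ _ (ltn_ord i)).
have [Vw | _] := boolP (valid_word (n1 + n2) w); last first.
  by rewrite mul0r big1 // => i _; rewrite andbF mul0r.
have n1_lt : (n1 < (size w).+1)%N.
  by case/andP: Vw => /eqP ->; rewrite ltnS leq_addr.
rewrite (bigD1 (Ordinal n1_lt)) //= eqxx big1 ?addr0 // => i ne_i.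
by rewrite -val_eqE /= in ne_i; rewrite (negbTE ne_i) mul0r.
Qed.

Lemma val_enum_set N (A : {set 'I_N}) (p : pred nat) :
  (forall i : 'I_N, (i \in A) = p i) -> map val (enum A) = filter p (iota 0 N).
Proof.
move=> Ap; rewrite -val_enum_ord filter_map enumT.
by congr map; apply: eq_filter => i; rewrite /= -Ap.
Qed.

Lemma val_enum_lowset n1 n2 : map val (enum (lowset n1 n2)) = iota 0 n1.
Proof.
rewrite (@val_enum_set _ _ (fun i => i < 0 + n1)%N); last by move=> i; rewrite inE.
exact: filter_iota_ltn (leq_addr n2 n1).
Qed.

Lemma val_enum_highset n1 n2 : map val (enum (highset n1 n2)) = iota n1 n2.
Proof.
rewrite (@val_enum_set _ _ (fun i => n1 <= i)%N); last by move=> i; rewrite inE.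
rewrite iotaD filter_cat add0n (@eq_in_filter _ _ pred0) ?filter_pred0 => [|i].
  by apply/all_filterP/allP => i; rewrite mem_iota => /andP [].
by rewrite mem_iota add0n => /andP [_ lt_i]; rewrite leqNgt lt_i.
Qed.

(* The values y = f (a + k) compatible with std(f^I) = g, for I the
   interval [a, a + m). *)
Definition admissible N a m (g : endo m) (k : 'I_m) : pred 'I_N :=
  [pred y : 'I_N | if (a <= y < a + m)%N then (y - a)%N == g k else g k == k].

Lemma ef_code_inj m : injective (@ef_code m).
Proof.
move=> g h /eq_in_map gh; apply/ffunP => k; apply: val_inj.
exact: gh (mem_enum _ k).
Qed.

Section StdresInterval.

Variables (N a : nat) (I : {set 'I_N}) (e : 'I_#|I| -> 'I_N).
Hypotheses (enumI : map val (enum I) = iota a #|I|)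
  (eE : forall k, e k = (a + k)%N :> nat).

Lemma mem_interval (y : 'I_N) : (y \in I) = (a <= y < a + #|I|)%N.
Proof. by rewrite -mem_enum -(mem_map val_inj) enumI mem_iota. Qed.

Lemma enum_val_interval k : enum_val k = e k.
Proof.
apply: ord_inj; rewrite eE (enum_val_nth (e k)) -(nth_map _ 0%N) -?cardE //.
by rewrite enumI nth_iota.
Qed.

Lemma stdres_intervalE (f : endo N) k :
  val (stdres f I k) = if (a <= f (e k) < a + #|I|)%N then (f (e k) - a)%N else val k.
Proof.
rewrite ffunE /= enum_val_interval mem_interval.
case: ifP => // /andP [le_a lt_a]; have lt_sub : (f (e k) - a < #|I|)%N.
  by rewrite -(ltn_add2l a) subnKC.
have index_fek : index (f (e k)) (enum I) = (f (e k) - a)%N.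
  have fek_nth : val (f (e k)) = nth 0%N (iota a #|I|) (f (e k) - a).
    by rewrite nth_iota // subnKC.
  rewrite -(index_map val_inj) enumI {1}fek_nth.
  by rewrite index_uniq ?iota_uniq ?size_iota.
by rewrite index_fek insubdK.
Qed.

End StdresInterval.

Lemma stdres_intervalP N (I : {set 'I_N}) a m (e : 'I_m -> 'I_N)
    (f : endo N) (g : endo m) :
  map val (enum I) = iota a m -> (forall k, e k = (a + k)%N :> nat) ->
  (ef_code (stdres f I) == ef_code g) = [forall k, admissible a g k (f (e k))].
Proof.
move=> enumI eE; have cardI : #|I| = m by rewrite cardE -(size_map val) enumI size_iota.
subst m; rewrite (inj_eq (@ef_code_inj _)).
have pointwise k : admissible a g k (f (e k)) = (stdres f I k == g k).
  rewrite /admissible /= -[RHS]val_eqE (stdres_intervalE enumI eE).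
  rewrite (fun_if (fun y => y == val (g k))).
  by case: ifP => // _; rewrite val_eqE eq_sym.
apply/eqP/forallP => [fg k | adm]; first by rewrite pointwise fg.
by apply/ffunP => k; apply/eqP; rewrite -pointwise.
Qed.

Lemma sum_rfactor_fix n w (j : 'I_n) (P : pred 'I_n) : ~~ P j ->
  \sum_(y | (y == j) || P y) rfactor w j y
  = \sum_(z | ~~ P z) (-1) ^+ (z != j) * sfactor w j z.
Proof.
move=> nPj; have P_neq y : P y -> y != j by apply: contraTneq => ->.
rewrite (bigD1 j) ?eqxx //= {1}/rfactor eqxx (bigID P) /=.
have rest : \sum_(y | ((y == j) || P y) && (y != j)) rfactor w j y
            = \sum_(y | P y) sfactor w j y.
  apply: eq_big => [y | y /andP [_ y_neq]]; last by rewrite /rfactor (negbTE y_neq).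
  by case: (eqVneq y j) => [-> | _]; rewrite ?(negbTE nPj) ?andbT.
have signs : \sum_(z | P z) (-1) ^+ (z != j) * sfactor w j z
             = - \sum_(z | P z) sfactor w j z.
  by rewrite -sumrN; apply: eq_bigr => z Pz; rewrite P_neq // expr1 mulN1r.
by rewrite rest signs addrAC addNr add0r.
Qed.

Section Block.

Variables (N a m : nat) (e : 'I_m -> 'I_N) (w w' : seq letter).
Hypotheses (eE : forall i, e i = (a + i)%N :> nat)
  (nth_w' : forall i : 'I_m, nth no_letter w' i = nth no_letter w (a + i)).

Lemma block_inj : injective e.
Proof. by move=> i i' /(congr1 (@nat_of_ord N)); rewrite !eE => /addnI /ord_inj. Qed.

Lemma sfactor_block i i' : sfactor w (e i) (e i') = sfactor w' i i'.
Proof. by rewrite /sfactor !eE -!nth_w' (inj_eq block_inj). Qed.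

Lemma sum_block_interval (F : 'I_N -> int) :
  \sum_(z : 'I_N | (a <= z < a + m)%N) F z = \sum_i F (e i).
Proof.
rewrite -(big_imset F (in2W block_inj)) /=; apply: eq_bigl => z.
apply/idP/imsetP => [/andP [le_a lt_am] | [i _ ->]]; last first.
  by rewrite eE leq_addr ltn_add2l ltn_ord.
have lt_m : (z - a < m)%N by rewrite -(ltn_add2l a) subnKC.
by exists (Ordinal lt_m) => //; apply: ord_inj; rewrite eE /= subnKC.
Qed.

Lemma sum_admissible_rfactor (g : endo m) k :
  \sum_(y | admissible a g k y) rfactor w (e k) y = rfactor w' k (g k).
Proof.
have e_in k' : (a <= e k' < a + m)%N by rewrite eE leq_addr ltn_add2l ltn_ord.
case: (eqVneq (g k) k) => [gkk | gk_neq].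
- have fix_pred y : admissible a g k y = (y == e k) || ~~ (a <= y < a + m)%N.
    rewrite /admissible inE /= gkk eqxx.
    case: ifP => [/andP [le_a _] | _]; last by rewrite orbT.
    by rewrite orbF -(inj_eq (@ord_inj N)) eE -(eqn_add2l a) subnKC.
  rewrite (eq_bigl _ _ fix_pred) sum_rfactor_fix ?negbK //.
  rewrite (eq_bigl _ _ (fun z => negbK _)) sum_block_interval /rfactor gkk eqxx.
  by apply: eq_bigr => i _; rewrite (inj_eq block_inj) sfactor_block.
- have nonfix_pred y : admissible a g k y = (y == e (g k)).
    rewrite /admissible inE /= (negbTE gk_neq) -(inj_eq (@ord_inj N)) eE.
    case: ifP => [/andP [le_a _] | not_in]; first by rewrite -(eqn_add2l a) subnKC.
    by apply/esym/negbTE; apply: contraFneq not_in => ->; rewrite -eE e_in.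
  rewrite (big_pred1 _ nonfix_pred) /rfactor (inj_eq block_inj) (negbTE gk_neq).
  exact: sfactor_block.
Qed.

End Block.

Lemma split_lshift m n (i : 'I_m) : split (lshift n i) = inl i.
Proof. exact: unsplitK (inl i). Qed.

Lemma split_rshift m n (i : 'I_n) : split (rshift m i) = inr i.
Proof. exact: unsplitK (inr i). Qed.

Lemma forall_split_ord m n (P : pred 'I_(m + n)) :
  [forall j, P j] = [forall i, P (lshift n i)] && [forall i, P (rshift m i)].
Proof.
apply/forallP/andP => [Pj | [/forallP Pl /forallP Pr] j].
  by split; apply/forallP => i.
by rewrite -(splitK j); case: (split j) => i; [apply: Pl | apply: Pr].
Qed.

Definition concat_admissible n1 n2 (f1 : endo n1) (f2 : endo n2) (j : 'I_(n1 + n2)) :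
  pred 'I_(n1 + n2) :=
  match split j with inl k => admissible 0 f1 k | inr k => admissible n1 f2 k end.

Lemma std_restrictionsP n1 n2 (f1 : endo n1) (f2 : endo n2) (f : endo (n1 + n2)) :
  (ef_code (stdres f (lowset n1 n2)) == ef_code f1)
    && (ef_code (stdres f (highset n1 n2)) == ef_code f2)
  = (f \in family (concat_admissible f1 f2)).
Proof.
rewrite (stdres_intervalP _ _ (val_enum_lowset n1 n2) (e := @lshift n1 n2)) //.
rewrite (stdres_intervalP _ _ (val_enum_highset n1 n2) (e := @rshift n1 n2)) //.
rewrite inE forall_split_ord /concat_admissible.
by congr (_ && _); apply: eq_forallb => i; rewrite /finfun.fmem ?split_lshift ?split_rshift.
Qed.

Unset Implicit Arguments.
Set Strict Implicit.

Theorem mainTheorem16 (n1 n2 : nat) (f1 : endo n1) (f2 : endo n2) (w : seq letter) :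
  ser_mul (Rf f1) (Rf f2) w =
  \sum_(f : endo (n1 + n2) | (ef_code (stdres f (lowset n1 n2)) == ef_code f1)
                          && (ef_code (stdres f (highset n1 n2)) == ef_code f2))
     Rf f w.
Proof.
rewrite (ser_mul_valid_word (Rf_prodE f1) (Rf_prodE f2)).
rewrite (eq_bigl _ _ (std_restrictionsP f1 f2)).
under [RHS]eq_bigr => f _ do rewrite Rf_prodE.
rewrite -mulr_sumr -bigA_distr_big_dep big_split_ord /=; congr (_ * (_ * _)).
  apply: eq_bigr => k _; rewrite /concat_admissible split_lshift.
  by apply/esym/sum_admissible_rfactor => i; rewrite ?nth_take.
apply: eq_bigr => k _; rewrite /concat_admissible split_rshift.
by apply/esym/sum_admissible_rfactor => i; rewrite ?nth_drop.
Qed.
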